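(* Let $P=(V,\leq)$ be a poset whose incomparability graph is connected and locally finite. Then every chain of $P$ is order-embeddable into the chain $\mathbb{Z}$ of integers.
   Context: The incomparability graph of $P$ has vertex set $V$ and edges the pairs of distinct incomparable elements. A graph is locally finite if every vertex has finitely many neighbours. A chain of $P$ is a subset of pairwise comparable elements, with the induced order. *)

From Stdlib Require Import ZArith List Relations.

Definition is_poset {V : Type} (le : V -> V -> Prop) : Prop :=
  (forall x, le x x) /\
  (forall x y, le x y -> le y x -> x = y) /\
  (forall x y z, le x y -> le y z -> le x z).

Definition incomparable {V : Type} (le : V -> V -> Prop) (x y : V) : Prop :=
  x <> y /\ ~ le x y /\ ~ le y x.

Definition locally_finite {V : Type} (E : V -> V -> Prop) : Prop :=
  forall x, exists l : list V, forall y, E x y -> In y l.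

Definition connected_graph {V : Type} (E : V -> V -> Prop) : Prop :=
  forall x y, clos_refl_trans V E x y.

Definition is_chain {V : Type} (le : V -> V -> Prop) (C : V -> Prop) : Prop :=
  forall x y, C x -> C y -> le x y \/ le y x.

Definition order_embeddable_in_Z {V : Type} (le : V -> V -> Prop) (C : V -> Prop) : Prop :=
  exists f : V -> Z, forall x y, C x -> C y -> (le x y <-> (f x <= f y)%Z).

(** Every interval [a, b] of P is finite: along a path a = z0 - z1 - ... - zn = b in the
    incomparability graph, an element c with a <= c <= b is comparable to z1 and cannot lie
    below it (else a <= z1), so c is z1, a neighbour of z1, or lies in [z1, b]; induction on
    the path length then covers [a, b] by finitely many neighbourhoods.  A chain with finite
    intervals embeds into Z: fix a0 in the chain and send x to the number of chain elements
    in [a0, x], or to minus the number of those in [x, a0] when x is not above a0. *)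
From Stdlib Require Import ZArith List Relations.
From Stdlib Require Import Classical ClassicalEpsilon Lia.

Lemma NoDup_enum_of_incl {V : Type} (P : V -> Prop) (l : list V) :
  (forall y, P y -> In y l) -> exists l', NoDup l' /\ forall y, In y l' <-> P y.
Proof.
  intros HPl.
  pose (eq_dec := fun x y : V => excluded_middle_informative (x = y)).
  pose (p := fun y => if excluded_middle_informative (P y) then true else false).
  exists (nodup eq_dec (filter p l)); split; [apply NoDup_nodup|].
  intros y; rewrite nodup_In, filter_In; unfold p.
  destruct (excluded_middle_informative (P y)) as [Hy|Hy]; split.
  - tauto.
  - auto.
  - intros [_ Hf]; discriminate.
  - tauto.
Qed.

Lemma NoDup_incl_length_lt {V : Type} (l1 l2 : list V) (z : V) :
  NoDup l1 -> incl l1 l2 -> In z l2 -> ~ In z l1 -> length l1 < length l2.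
Proof.
  intros Hnd Hincl Hz Hnz.
  apply (NoDup_incl_length (l := z :: l1)); [now constructor|].
  intros y [<-|Hy]; auto.
Qed.

Section FiniteIntervals.

Context {V : Type} (le : V -> V -> Prop).
Hypothesis le_poset : is_poset le.
Hypothesis incomparable_locally_finite : locally_finite (incomparable le).

Lemma interval_covered_of_path (x y : V) :
  clos_refl_trans_1n V (incomparable le) x y ->
  exists l, forall c, le x c -> le c y -> In c l.
Proof.
  destruct le_poset as [_ [le_anti le_trans]].
  induction 1 as [x|x z y Hxz _ [l Hl]].
  - exists (x :: nil); intros c Hxc Hcx; left; apply le_anti; assumption.
  - destruct (incomparable_locally_finite z) as [Nz HNz].
    exists (z :: Nz ++ l); intros c Hxc Hcy.
    destruct (classic (z = c)) as [<-|Hzc]; [now left|right].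
    apply in_or_app.
    destruct (classic (le z c)) as [Hle|Hnle]; [right; now apply Hl|left].
    apply HNz; repeat split; [exact Hzc|exact Hnle|].
    intros Hcz; destruct Hxz as [_ [Hnxz _]]; exact (Hnxz (le_trans _ _ _ Hxc Hcz)).
Qed.

Lemma interval_finite :
  connected_graph (incomparable le) ->
  forall a b, exists l, forall c, le a c -> le c b -> In c l.
Proof.
  intros Hconn a b; apply interval_covered_of_path, clos_rt_rt1n, Hconn.
Qed.

End FiniteIntervals.

Section StrictlyMonotoneOnChain.

Context {V : Type} (le : V -> V -> Prop) (C : V -> Prop).
Hypothesis le_poset : is_poset le.
Hypothesis C_chain : is_chain le C.

Lemma order_embedding_of_strict_mono (f : V -> Z) :
  (forall x y, C x -> C y -> le x y -> x <> y -> (f x < f y)%Z) ->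
  forall x y, C x -> C y -> (le x y <-> (f x <= f y)%Z).
Proof.
  destruct le_poset as [le_refl _].
  intros f_mono x y Hx Hy; split.
  - intros Hxy; destruct (classic (x = y)) as [<-|Hne]; [lia|].
    specialize (f_mono x y Hx Hy Hxy Hne); lia.
  - intros Hf; destruct (C_chain x y Hx Hy) as [Hxy|Hyx]; [exact Hxy|].
    destruct (classic (x = y)) as [<-|Hne]; [apply le_refl|].
    specialize (f_mono y x Hy Hx Hyx (not_eq_sym Hne)); lia.
Qed.

End StrictlyMonotoneOnChain.

Section ChainWithFiniteIntervals.

Context {V : Type} (le : V -> V -> Prop) (C : V -> Prop).
Hypothesis le_poset : is_poset le.
Hypothesis C_chain : is_chain le C.
Hypothesis C_interval_finite :
  forall a b, exists l, forall c, C c -> le a c -> le c b -> In c l.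

Definition in_chain_interval (a b c : V) : Prop := C c /\ le a c /\ le c b.

Lemma chain_interval_enum (a b : V) :
  exists l, NoDup l /\ forall c, In c l <-> in_chain_interval a b c.
Proof.
  destruct (C_interval_finite a b) as [l Hl].
  apply (NoDup_enum_of_incl _ l); intros c [Hc [Hac Hcb]]; now apply Hl.
Qed.

Definition chain_interval (a b : V) : list V :=
  proj1_sig (constructive_indefinite_description _ (chain_interval_enum a b)).

Lemma chain_interval_spec (a b : V) :
  NoDup (chain_interval a b) /\
  forall c, In c (chain_interval a b) <-> in_chain_interval a b c.
Proof. exact (proj2_sig (constructive_indefinite_description _ (chain_interval_enum a b))). Qed.

Lemma chain_interval_length_lt (a b a' b' z : V) :
  (forall c, in_chain_interval a b c -> in_chain_interval a' b' c) ->
  in_chain_interval a' b' z -> ~ in_chain_interval a b z ->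
  length (chain_interval a b) < length (chain_interval a' b').
Proof.
  destruct (chain_interval_spec a b) as [Hnd Hab].
  destruct (chain_interval_spec a' b') as [_ Hab'].
  intros Hsub Hz Hnz; apply (NoDup_incl_length_lt _ _ z Hnd).
  - intros c Hc; apply Hab', Hsub, Hab, Hc.
  - now apply Hab'.
  - now rewrite Hab.
Qed.

Lemma chain_interval_length_pos (a b : V) :
  C b -> le a b -> 0 < length (chain_interval a b).
Proof.
  destruct le_poset as [le_refl _].
  intros Hb Hab.
  assert (Hin : In b (chain_interval a b)) by (apply chain_interval_spec; now repeat split).
  destruct (chain_interval a b); [destruct Hin|simpl; lia].
Qed.

Variable a0 : V.
Hypothesis C_a0 : C a0.

Definition chain_rank (x : V) : Z :=
  if excluded_middle_informative (le a0 x) then Z.of_nat (length (chain_interval a0 x))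
  else (- Z.of_nat (length (chain_interval x a0)))%Z.

Lemma chain_rank_strict_mono (x y : V) :
  C x -> C y -> le x y -> x <> y -> (chain_rank x < chain_rank y)%Z.
Proof.
  destruct le_poset as [le_refl [le_anti le_trans]].
  intros Hx Hy Hxy Hne; unfold chain_rank.
  assert (below_a0 : forall z, C z -> ~ le a0 z -> le z a0).
  { intros z Hz Hnz; destruct (C_chain z a0 Hz C_a0); tauto. }
  destruct (excluded_middle_informative (le a0 x)) as [H0x|H0x];
  destruct (excluded_middle_informative (le a0 y)) as [H0y|H0y].
  - apply Nat2Z.inj_lt, (chain_interval_length_lt _ _ _ _ y).
    + intros c [Hc [H0c Hcx]]; repeat split; eauto.
    + now repeat split.
    + intros [_ [_ Hyx]]; exact (Hne (le_anti _ _ Hxy Hyx)).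
  - exfalso; exact (H0y (le_trans _ _ _ H0x Hxy)).
  - pose proof (chain_interval_length_pos a0 y Hy H0y); lia.
  - cut (length (chain_interval y a0) < length (chain_interval x a0)); [lia|].
    apply (chain_interval_length_lt _ _ _ _ x).
    + intros c [Hc [Hyc Hc0]]; repeat split; eauto.
    + repeat split; auto.
    + intros [_ [Hyx _]]; exact (Hne (le_anti _ _ Hxy Hyx)).
Qed.

End ChainWithFiniteIntervals.

Lemma chain_with_finite_intervals_embeddable {V : Type} (le : V -> V -> Prop) (C : V -> Prop) :
  is_poset le -> is_chain le C ->
  (forall a b, exists l, forall c, C c -> le a c -> le c b -> In c l) ->
  order_embeddable_in_Z le C.
Proof.
  intros Hposet Hchain Hfin.
  destruct (classic (exists a0, C a0)) as [[a0 Ha0]|Hempty].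
  - exists (chain_rank le C Hfin a0).
    apply (order_embedding_of_strict_mono le C Hposet Hchain).
    intros x y; now apply chain_rank_strict_mono.
  - exists (fun _ => 0%Z); intros x y Hx; exfalso; eauto.
Qed.

Theorem mainTheorem5 (V : Type) (le : V -> V -> Prop) :
  is_poset le ->
  connected_graph (incomparable le) ->
  locally_finite (incomparable le) ->
  forall C : V -> Prop, is_chain le C -> order_embeddable_in_Z le C.
Proof.
  intros Hposet Hconn Hlf C Hchain.
  apply chain_with_finite_intervals_embeddable; [assumption|assumption|].
  intros a b; destruct (interval_finite le Hposet Hlf Hconn a b) as [l Hl].
  exists l; auto.
Qed.
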